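(* For every integer $k\ge 6$, there are infinitely many (pairwise non-isomorphic) $k$-vertex-critical graphs that are both $P_5$-free and $C_5$-free.
   Context: $\chi(G)$ denotes the chromatic number of $G$. A graph $G$ is $k$-vertex-critical if $\chi(G)=k$ and $\chi(G-v)<k$ for every vertex $v$ of $G$. $P_5$ is the path on five vertices and $C_5$ is the 5-cycle. A graph is $H$-free if it contains no induced subgraph isomorphic to $H$. *)

From mathcomp Require Import all_boot.
Set Implicit Arguments. Unset Strict Implicit. Unset Printing Implicit Defensive.

Definition simple_graph (T : finType) (e : rel T) : Prop :=
  symmetric e /\ irreflexive e.

Definition colorable_on (T : finType) (e : rel T) (S : {set T}) (k : nat) : Prop :=
  exists c : T -> 'I_k, forall x y, x \in S -> y \in S -> e x y -> c x != c y.

Definition chi_on (T : finType) (e : rel T) (S : {set T}) (k : nat) : Prop :=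
  colorable_on e S k /\ forall j, colorable_on e S j -> k <= j.

Definition chi (T : finType) (e : rel T) (k : nat) : Prop := chi_on e setT k.

Definition vertex_critical (T : finType) (e : rel T) (k : nat) : Prop :=
  chi e k /\ forall v : T, forall j, chi_on e [set~ v] j -> j < k.

Definition induced_sub (m : nat) (h : rel 'I_m) (T : finType) (e : rel T) : Prop :=
  exists f : 'I_m -> T, injective f /\ forall i j, e (f i) (f j) = h i j.

Definition H_free (m : nat) (h : rel 'I_m) (T : finType) (e : rel T) : Prop :=
  ~ induced_sub h e.

Definition P5 : rel 'I_5 := fun i j => (i.+1 == j :> nat) || (j.+1 == i :> nat).
Definition C5 : rel 'I_5 :=
  fun i j => (j == (i.+1 %% 5) :> nat) || (i == (j.+1 %% 5) :> nat).

From mathcomp Require Import all_boot zify.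
Set Implicit Arguments. Unset Strict Implicit. Unset Printing Implicit Defensive.

(* The witnesses are the circular cliques K_{n/d} with n = (k-1)d + 1: vertices
   are the points of Z_n, adjacent when their clockwise distances [cw] both ways
   are at least d. Pairwise non-adjacent vertices fit in an arc of d points, so
   a colour class has at most d vertices and chi >= n/d > k-1; colouring x by
   x/d uses k colours, and after deleting v, colouring x by (cw v x - 1)/d uses
   k-1. Two non-adjacent vertices are within clockwise distance < d of each
   other in some direction, and along an induced 4- or 5-cycle of the
   complement this direction cannot flip; the cycle would then wind around Z_n
   in fewer than 5 steps of length < d <= n/5, which is impossible. This
   excludes 2K2 (whose complement is C4, and which P5 contains) and C5. *)

Definition cw (n x y : nat) : nat := if x <= y then y - x else y + n - x.

Definition circular_clique (n d : nat) : rel 'I_n :=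
  fun x y => (d <= cw n x y) && (d <= cw n y x).

Lemma ltn_div_gap a b d : 0 < d -> a + d <= b -> a %/ d < b %/ d.
Proof.
move=> d_gt0 ab; apply: leq_trans (leq_div2r d ab).
by rewrite divnDr // divnn d_gt0 addn1.
Qed.

Lemma colorable_on_div (T : finType) (e : rel T) (S : {set T}) (g : T -> nat) m d :
  0 < m -> (forall x, x \in S -> g x < m * d) ->
  (forall x y, x \in S -> y \in S -> e x y -> g x + d <= g y \/ g y + d <= g x) ->
  colorable_on e S m.
Proof.
move=> m_gt0 g_lt gap.
exists (fun x => Ordinal (ltn_pmod (g x %/ d) m_gt0)) => x y Sx Sy exy.
have d_gt0 : 0 < d by rewrite lt0n; apply: contraTneq (g_lt x Sx) => ->; rewrite muln0.
have lt_m z : z \in S -> g z %/ d < m by move/g_lt; rewrite ltn_divLR.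
rewrite -val_eqE /= !modn_small ?lt_m //.
by case: (gap x y Sx Sy exy) => /(ltn_div_gap d_gt0); [move/ltn_eqF | rewrite eq_sym => /ltn_eqF] => ->.
Qed.

Section CircularClique.
Variables n d : nat.
Hypothesis d_gt0 : 0 < d.

Local Notation G := (@circular_clique n d).

Lemma circular_clique_sym : symmetric G.
Proof. by move=> x y; rewrite /circular_clique andbC. Qed.

Lemma cwxx x : cw n x x = 0.
Proof. by rewrite /cw leqnn subnn. Qed.

Lemma circular_clique_irrefl : irreflexive G.
Proof. by move=> x; rewrite /circular_clique cwxx leqNgt d_gt0. Qed.

Lemma circular_cliqueN (x y : 'I_n) : ~~ G x y = (cw n x y < d) || (cw n y x < d).
Proof. by rewrite negb_and -!ltnNge. Qed.

Ltac cw_lia := rewrite /circular_clique /cw; repeat case: ifP => ?; lia.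

Lemma cw_inj (r : 'I_n) : injective (fun x : 'I_n => cw n r x).
Proof.
move=> x y /= eq_cw; apply: ord_inj; move: eq_cw.
by have := ltn_ord r; have := ltn_ord x; have := ltn_ord y; cw_lia.
Qed.

Lemma cw_lt_next (x y z : 'I_n) : cw n x y < d -> ~~ G y z -> G x z -> cw n y z < d.
Proof. by have := ltn_ord x; have := ltn_ord y; have := ltn_ord z; cw_lia. Qed.

Hypothesis n_ge5d : 5 * d <= n.

(* The step lengths add up to a multiple of n, but to less than 5d <= n. *)
Lemma cw_closed_walk5 (y0 y1 y2 y3 y4 : 'I_n) :
  cw n y0 y1 < d -> cw n y1 y2 < d -> cw n y2 y3 < d -> cw n y3 y4 < d -> cw n y4 y0 < d ->
  y0 = y2.
Proof.
move=> h01 h12 h23 h34 h40; apply: ord_inj; move: h01 h12 h23 h34 h40.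
move: (ltn_ord y0) (ltn_ord y1) (ltn_ord y2) (ltn_ord y3) (ltn_ord y4); cw_lia.
Qed.

Lemma complement_C4_oriented (y0 y1 y2 y3 : 'I_n) :
  cw n y0 y1 < d -> ~~ G y1 y2 -> ~~ G y2 y3 -> ~~ G y3 y0 -> G y0 y2 -> G y1 y3 -> False.
Proof.
move=> h01 n12 n23 n30 g02 g13.
have h12 := cw_lt_next h01 n12 g02.
have h23 := cw_lt_next h12 n23 g13.
have h30 := cw_lt_next h23 n30 (etrans (circular_clique_sym _ _) g02).
(* A 4-cycle is a closed 5-step walk with a null last step. *)
have h00 : cw n y0 y0 < d by rewrite cwxx.
by move: g02; rewrite (cw_closed_walk5 h01 h12 h23 h30 h00) circular_clique_irrefl.
Qed.

Lemma complement_C5_oriented (y0 y1 y2 y3 y4 : 'I_n) :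
  cw n y0 y1 < d -> ~~ G y1 y2 -> ~~ G y2 y3 -> ~~ G y3 y4 -> ~~ G y4 y0 ->
  G y0 y2 -> G y1 y3 -> G y2 y4 -> G y3 y0 -> False.
Proof.
move=> h01 n12 n23 n34 n40 g02 g13 g24 g30.
have h12 := cw_lt_next h01 n12 g02.
have h23 := cw_lt_next h12 n23 g13.
have h34 := cw_lt_next h23 n34 g24.
have h40 := cw_lt_next h34 n40 g30.
by move: g02; rewrite (cw_closed_walk5 h01 h12 h23 h34 h40) circular_clique_irrefl.
Qed.

Lemma circular_clique_no_2K2 (a b c e : 'I_n) :
  G a b -> G c e -> ~~ G a c -> ~~ G a e -> ~~ G b c -> ~~ G b e -> False.
Proof.
move=> gab gce nac nae nbc nbe.
move: (nac); rewrite circular_cliqueN => /orP[ac | ca].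
- by apply: (complement_C4_oriented ac _ nbe _ gab gce); rewrite circular_clique_sym.
- by apply: (complement_C4_oriented ca nae _ nbc gce gab); rewrite circular_clique_sym.
Qed.

Lemma circular_clique_no_C5 (y0 y1 y2 y3 y4 : 'I_n) :
  G y0 y1 -> G y1 y2 -> G y2 y3 -> G y3 y4 -> G y4 y0 ->
  ~~ G y0 y2 -> ~~ G y1 y3 -> ~~ G y2 y4 -> ~~ G y3 y0 -> ~~ G y4 y1 -> False.
Proof.
move=> g01 g12 g23 g34 g40 n02 n13 n24 n30 n41.
(* In the complement, y0 y2 y4 y1 y3 is again an induced 5-cycle. *)
move: (n02); rewrite circular_cliqueN => /orP[h02 | h20].
- by apply: (complement_C5_oriented h02 n24 n41 n13 n30); rewrite circular_clique_sym.
- by apply: (complement_C5_oriented h20 _ _ _ _ g23 g01 g34 g12); rewrite circular_clique_sym.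
Qed.

Lemma independent_anchor (A : {pred 'I_n}) (a : 'I_n) : a \in A ->
  {in A &, forall x y, ~~ G x y} -> exists r : 'I_n, {in A, forall x : 'I_n, cw n r x < d}.
Proof.
move=> Aa indA.
(* r is the element of A farthest behind a, within distance d. *)
have Ba : a \in [pred x in A | cw n x a < d] by rewrite inE Aa cwxx.
case: (arg_maxnP (fun x : 'I_n => cw n x a) Ba) => r /andP[Ar ra] rmax.
exists r => x Ax; move: (indA _ _ Ar Ax) (indA _ _ Ax Aa) ra.
have [xa | ax] := ltnP (cw n x a) d.
- have xr : cw n x a <= cw n r a by apply: rmax; rewrite /= Ax xa.
  by move: xa xr (ltn_ord r) (ltn_ord x) (ltn_ord a); rewrite !circular_cliqueN; cw_lia.
- by move: ax (ltn_ord r) (ltn_ord x) (ltn_ord a); rewrite !circular_cliqueN; cw_lia.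
Qed.

Lemma independent_card_le (A : {pred 'I_n}) : {in A &, forall x y, ~~ G x y} -> #|A| <= d.
Proof.
move=> indA; case: (pickP A) => [a Aa | A0]; last by rewrite eq_card0.
have [r r_anchor] := independent_anchor Aa indA.
rewrite cardE -(size_map (fun x : 'I_n => cw n r x)) -(size_iota 0 d).
apply: uniq_leq_size => [|_ /mapP[x Ax ->]]; first by rewrite (map_inj_uniq (@cw_inj r)) enum_uniq.
by rewrite mem_iota /= r_anchor // -mem_enum.
Qed.

Lemma circular_clique_colorable_ge j : colorable_on G setT j -> n <= j * d.
Proof.
case=> c proper_c.
rewrite -{1}[n]card_ord -sum1_card (partition_big c predT) //= -[j in j * d]card_ord -sum_nat_const.
apply: leq_sum => i _; rewrite sum1_card; apply: independent_card_le => x y.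
move=> /eqP cx /eqP cy.
by apply/negP => /(proper_c x y (in_setT x) (in_setT y)); rewrite -val_eqE cx cy eqxx.
Qed.

Lemma circular_clique_P5_free : H_free P5 G.
Proof.
move=> [f [_ fE]]; pose E i j (hi : i < 5) (hj : j < 5) := fE (Ordinal hi) (Ordinal hj).
exact: (circular_clique_no_2K2 (E 0 1 isT isT) (E 3 4 isT isT)
  (negbT (E 0 3 isT isT)) (negbT (E 0 4 isT isT)) (negbT (E 1 3 isT isT)) (negbT (E 1 4 isT isT))).
Qed.

Lemma circular_clique_C5_free : H_free C5 G.
Proof.
move=> [f [_ fE]]; pose E i j (hi : i < 5) (hj : j < 5) := fE (Ordinal hi) (Ordinal hj).
exact: (circular_clique_no_C5 (E 0 1 isT isT) (E 1 2 isT isT) (E 2 3 isT isT) (E 3 4 isT isT)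
  (E 4 0 isT isT) (negbT (E 0 2 isT isT)) (negbT (E 1 3 isT isT)) (negbT (E 2 4 isT isT))
  (negbT (E 3 0 isT isT)) (negbT (E 4 1 isT isT))).
Qed.

Variable m : nat.
Hypothesis n_def : n = m * d + 1.

Lemma circular_clique_colorable : colorable_on G setT m.+1.
Proof.
apply: (@colorable_on_div _ _ _ (@nat_of_ord n) _ d) => // [x _ | x y _ _].
  by rewrite mulSn; move: (ltn_ord x); lia.
by move: (ltn_ord x) (ltn_ord y); cw_lia.
Qed.

Lemma circular_clique_colorable_setC1 v : colorable_on G [set~ v] m.
Proof.
apply: (@colorable_on_div _ _ _ (fun x : 'I_n => cw n v x - 1) _ d) => [| x | x y].
- by rewrite lt0n; apply: contraTneq n_ge5d => m0; rewrite n_def m0; lia.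
- by rewrite !inE -(inj_eq (@ord_inj n)); move: (ltn_ord x) (ltn_ord v); cw_lia.
- by rewrite !inE -!(inj_eq (@ord_inj n)); move: (ltn_ord x) (ltn_ord y) (ltn_ord v); cw_lia.
Qed.

Lemma circular_clique_chi : chi G m.+1.
Proof.
split=> [|j]; first exact: circular_clique_colorable.
by move=> /circular_clique_colorable_ge; rewrite n_def addn1 ltn_pmul2r.
Qed.

Lemma circular_clique_vertex_critical : vertex_critical G m.+1.
Proof.
split=> [|v j [_ min_j]]; first exact: circular_clique_chi.
exact: leq_ltn_trans (min_j m (circular_clique_colorable_setC1 v)) (ltnSn m).
Qed.

End CircularClique.

Theorem corollary2p8 :
  forall k : nat, 6 <= k ->
  forall N : nat, exists (n : nat) (e : rel 'I_n),
    N < n /\ simple_graph e /\ vertex_critical e k /\ H_free P5 e /\ H_free C5 e.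
Proof.
move=> k k_ge6 N; set d := N.+1; set m := k.-1.
have k_def : k = m.+1 by rewrite prednK //; lia.
have n_ge5d : 5 * d <= m * d + 1.
  by rewrite (leq_trans _ (leq_addr 1 _)) // leq_mul2r; lia.
exists (m * d + 1), (@circular_clique (m * d + 1) d); rewrite k_def.
split; first by move: n_ge5d; lia.
split; first by split; [exact: circular_clique_sym | exact: circular_clique_irrefl].
split; first exact: circular_clique_vertex_critical.
by split; [exact: circular_clique_P5_free | exact: circular_clique_C5_free].
Qed.
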